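(* Let $f:\mathcal{V}\to\mathbb{P}(\mathcal{L})$ be a planar discrete curve that admits an $(\mathfrak{m})$-type Darboux evolution map $\sigma_r$, i.e. there exists a circle congruence $c \in \mathcal{P}^\pm$ evolved by $\sigma_r$ that lies in a linear complex $\overline{\mathfrak{m}}^\perp$ (that is, $\langle \mathfrak{c}_i,\overline{\mathfrak{m}}\rangle=0$ for all $i$, with $\overline{\mathfrak{m}}\in\operatorname{span}\{\mathfrak{m},\mathfrak{p}\}$). Suppose the homogeneous coordinates $\mathfrak{c}_i \in c_i$ satisfy $\langle\mathfrak{c}_i,\mathfrak{p}\rangle=-1$. In the following three cases there are initial points such that this evolution map gives rise to real Darboux transforms: (i) If $\langle\overline{\mathfrak{m}},\overline{\mathfrak{m}}\rangle<0$ and $\langle\overline{\mathfrak{m}},\mathfrak{p}\rangle^2+\langle\overline{\mathfrak{m}},\overline{\mathfrak{m}}\rangle\neq 0$, then there are two $(\mathfrak{m})$-type Darboux transforms $g^\pm$ of $f$, explicitly given by $$\mathfrak{g}_i^\pm=\mathfrak{c}_i+\mu^\pm\overline{\mathfrak{m}}+(\mu^\pm\langle\overline{\mathfrak{m}},\mathfrak{p}\rangle-1)\mathfrak{p},\qquad \mu^\pm:=\frac{\langle\overline{\mathfrak{m}},\mathfrak{p}\rangle\pm\sqrt{-\langle\overline{\mathfrak{m}},\overline{\mathfrak{m}}\rangle}}{\langle\overline{\mathfrak{m}},\mathfrak{p}\rangle^2+\langle\overline{\mathfrak{m}},\overline{\mathfrak{m}}\rangle}.$$ (ii) If $\langle\overline{\mathfrak{m}},\mathfrak{p}\rangle^2+\langle\overline{\mathfrak{m}},\overline{\mathfrak{m}}\rangle=0$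 and $\langle\overline{\mathfrak{m}},\mathfrak{p}\rangle\neq0$, then there exists one Darboux transform $g$ given by $$\mathfrak{g}_i=\mathfrak{c}_i+\frac{1}{2\langle\overline{\mathfrak{m}},\mathfrak{p}\rangle}\overline{\mathfrak{m}}-\frac12\mathfrak{p}.$$ (iii) If $\langle\overline{\mathfrak{m}},\overline{\mathfrak{m}}\rangle=0$ and $\langle\overline{\mathfrak{m}},\mathfrak{p}\rangle\neq0$, then the curve points of the induced Darboux transform $g$ lie on the circle represented by $\overline{\mathfrak{m}}\in\mathbb{P}(\mathcal{L})$ and are given by $$\mathfrak{g}_i=\mathfrak{c}_i+\frac{1}{\langle\overline{\mathfrak{m}},\mathfrak{p}\rangle}\overline{\mathfrak{m}}.$$
   Context: Setting (light cone model of planar Lie/Möbius geometry): $\mathbb{R}^{3,2}$ is a 5-dimensional real vector space with an inner product $\langle\cdot,\cdot\rangle$ of signature $(3,2)$; $\mathbb{P}(\mathcal{L})=\{\mathbb{R}\mathfrak{v}:\langle\mathfrak{v},\mathfrak{v}\rangle=0,\mathfrak{v}\neq0\}$ is the projective light cone, whose elements correspond to points, oriented circles and oriented lines in $\mathbb{R}^2\cup\{\infty\}$. Fraktur letters denote homogeneous coordinates of the corresponding projective elements. The point-sphere complex is $\mathfrak{p}=(0,0,0,0,1)$; $v\in\mathbb{P}(\mathcal{L})$ represents a point iff $\langle\mathfrak{v},\mathfrak{p}\rangle=0$. Two objects are in oriented contact (e.g. a point lies on a circle) iff their inner product vanishes. For $\mathfrak{a}$ with $\langle\mathfrak{a},\mathfrak{a}\rangle\ne0$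 the inversion is $\sigma_a(\mathfrak{s})=\mathfrak{s}-\frac{2\langle\mathfrak{s},\mathfrak{a}\rangle}{\langle\mathfrak{a},\mathfrak{a}\rangle}\mathfrak{a}$; it is an M-inversion (maps points to points) iff $\langle\mathfrak{a},\mathfrak{p}\rangle=0$. A linear complex determined by $\mathfrak{a}$ is the family of circles $s\in\mathbb{P}(\mathcal{L})$ with $\langle\mathfrak{s},\mathfrak{a}\rangle=0$. A planar discrete curve is a map $f:\mathcal{V}\to\mathbb{P}(\mathcal{L})$ into points, on a 1-dimensional connected graph $\mathcal{V}$ (edges $\mathcal{E}$). An evolution map of $f$ is a map $\sigma:\mathcal{E}\to\{\text{M-inversions}\}$ with $\sigma_{ij}(\mathfrak{f}_i)=\mathfrak{f}_j$; for any initial point $g_0$, the iteratively defined curve $\mathfrak{g}_j:=\sigma_{ij}(\mathfrak{g}_i)$ is a (discrete) Ribaucour transform of $f$ (all quadrilaterals $f_i,f_j,g_j,g_i$ are concircular). Such a Ribaucour pair is a Darboux pair ($g$ a Darboux transform of $f$) if the cross-ratios of all its circular faces are constant. An evolution map is of $(\mathfrak{m})$-type if every element of $\operatorname{span}\{\mathfrak{m},\mathfrak{p}\}$ is a fixed point of all its inversions. For each vertex $i$, $\mathcal{P}_i^\pm$ is the circle pencil $\operatorname{span}\{\mathfrak{f}_{i-1},\mathfrak{f}_{i+1}\}^\perp\cap\mathcal{L}$ of all oriented circles through $f_{i-1}$ and $f_{i+1}$; a circle congruence $c\in\mathcal{P}^\pm$ assigns to each vertex $i$ a circle $c_i\in\mathcal{P}_i^\pm$.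 An $(\mathfrak{m})$-type Darboux evolution map for $f$ is an $(\mathfrak{m})$-type evolution map of $f$ that evolves some circle congruence $c\in\mathcal{P}^\pm$, i.e. $\sigma_{ij}(\mathfrak{c}_i)=\mathfrak{c}_j$ for homogeneous coordinates with $\langle\mathfrak{c}_i,\mathfrak{p}\rangle=\langle\mathfrak{c}_j,\mathfrak{p}\rangle=-1$; such an evolved congruence lies in a fixed linear complex determined by some $\overline{\mathfrak{m}}=\mathfrak{m}-\xi\mathfrak{p}\in\operatorname{span}\{\mathfrak{m},\mathfrak{p}\}$. *)

(* Light cone model R^{3,2} of planar Lie/Moebius geometry. *)
From HB Require Import structures.
From mathcomp Require Import all_boot all_order all_algebra.
Set Implicit Arguments. Unset Strict Implicit. Unset Printing Implicit Defensive.
Import Order.TTheory GRing.Theory Num.Theory.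
Local Open Scope ring_scope.

Section LightCone.
Variable R : rcfType.

Notation vec := 'rV[R]_5.

Definition eta (k : 'I_5) : R := if (k < 3)%N then 1 else -1.

Definition lip (u v : vec) : R := \sum_(k < 5) eta k * u 0 k * v 0 k.

(* the point-sphere complex p = (0,0,0,0,1); <p,p> = -1 *)
Definition pt : vec := \row_(k < 5) (if (k == 4 :> nat) then 1 else 0).

Definition sinv (a s : vec) : vec := s - (2 * lip s a / lip a a) *: a.

Definition is_point (v : vec) : Prop := v != 0 /\ lip v v = 0 /\ lip v pt = 0.

(* planar discrete curve on the graph Z (edges {i,i+1}); adjacent vertices
   are distinct points *)
Definition discrete_curve (f : int -> vec) : Prop :=
  (forall i, is_point (f i)) /\ (forall i (t : R), f (i + 1) != t *: f i).

Definition M_inversion (a : vec) : Prop := lip a a != 0 /\ lip a pt = 0.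

Definition evolution_map (f : int -> vec) (a : int -> vec) : Prop :=
  forall i, M_inversion (a i) /\
    exists t : R, t != 0 /\ sinv (a i) (f i) = t *: f (i + 1).

Definition m_type (m : vec) (a : int -> vec) : Prop :=
  forall i (al be : R), sinv (a i) (al *: m + be *: pt) = al *: m + be *: pt.

(* c is an (oriented) circle of the pencil P_i^{+-} through f_{i-1}, f_{i+1} *)
Definition in_pencil (f : int -> vec) (i : int) (c : vec) : Prop :=
  c != 0 /\ lip c c = 0 /\ lip c (f (i - 1)) = 0 /\ lip c (f (i + 1)) = 0.

(* Real cross-ratio of four concircular points a,b,c,d: the (real) complex
   cross-ratio q = (a-b)(c-d)/((b-c)(d-a)); since |q|^2 = N1/D and
   |1-q|^2 = N2/D with the light-cone inner products below, q = (D+N1-N2)/(2D). *)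
Definition cr_D (a b c d : vec) : R := lip b c * lip d a.
Definition cr_N1 (a b c d : vec) : R := lip a b * lip c d.
Definition cr_N2 (a b c d : vec) : R := lip a c * lip b d.
Definition cross_ratio (a b c d : vec) : R :=
  (cr_D a b c d + cr_N1 a b c d - cr_N2 a b c d) / (2 * cr_D a b c d).

(* cross_ratio a b c d = lam, with the denominator cleared *)
Definition cr_is (a b c d : vec) (lam : R) : Prop :=
  cr_D a b c d + cr_N1 a b c d - cr_N2 a b c d = 2 * lam * cr_D a b c d.

Definition ribaucour_via (a : int -> vec) (g : int -> vec) : Prop :=
  (forall i, is_point (g i)) /\ (forall i, g (i + 1) = sinv (a i) (g i)).

Definition darboux_pair (f g : int -> vec) : Prop :=
  exists lam : R, forall i, cr_is (f i) (f (i + 1)) (g (i + 1)) (g i) lam.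

Definition darboux_transform_via (a : int -> vec) (f g : int -> vec) : Prop :=
  ribaucour_via a g /\ darboux_pair f g.

End LightCone.

From Pilot Require Import Defs.
From HB Require Import structures.
From mathcomp Require Import all_boot all_order all_algebra ring lra.
Import Order.TTheory GRing.Theory Num.Theory.
Set Implicit Arguments. Unset Strict Implicit. Unset Printing Implicit Defensive.
Local Open Scope ring_scope.

(* Since the inversions fix [mb] and [p], every [g_i = c_i + mu mb + nu p] is
   carried along by the evolution map exactly like [c_i].  With [q = <mb,p>] and
   [nu = mu q - 1], [g_i] is null and orthogonal to [p] precisely when
   [mu^2 (<mb,mb> + q^2) - 2 mu q + 1 = 0].  Writing [x_i = <f_i,c_i>] and
   [y_i = <f_i,mb>], the face [(f_i, f_(i+1), g_(i+1), g_i)] has cross-ratio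
   [x_i / (x_i + mu y_i)]; the inversions being isometries, [x_i] and [y_i] are
   rescaled by the same factor along each edge, so this cross-ratio is constant. *)

Section InnerProduct.
Variable R : rcfType.
Implicit Types (u v w A : 'rV[R]_5) (s : R).

Lemma lipC u v : lip u v = lip v u.
Proof. by apply: eq_bigr => k _; rewrite mulrAC. Qed.

Lemma lipDl u v w : lip (u + v) w = lip u w + lip v w.
Proof. rewrite /lip -big_split /=; apply: eq_bigr => k _; rewrite !mxE; ring. Qed.

Lemma lipDr u v w : lip w (u + v) = lip w u + lip w v.
Proof. by rewrite !(lipC w) lipDl. Qed.

Lemma lipZl s u w : lip (s *: u) w = s * lip u w.
Proof. rewrite /lip mulr_sumr; apply: eq_bigr => k _; rewrite !mxE; ring. Qed.

Lemma lipZr s u w : lip w (s *: u) = s * lip w u.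
Proof. by rewrite !(lipC w) lipZl. Qed.

Lemma lipNl u w : lip (- u) w = - lip u w.
Proof. by rewrite -scaleN1r lipZl mulN1r. Qed.

Lemma lip0l w : lip 0 w = 0.
Proof. by apply: big1 => k _; rewrite mxE mulr0 mul0r. Qed.

Lemma lip_pt_pt : lip (pt R) (pt R) = -1.
Proof. by rewrite /lip !big_ord_recr big_ord0 /= !mxE /Defs.eta /=; ring. Qed.

Lemma lip_sinvl A u v :
  lip (sinv A u) v = lip u v - 2 * lip u A * lip v A / lip A A.
Proof. by rewrite /sinv lipDl lipNl lipZl (lipC A v) mulrAC. Qed.

Lemma lip_sinvr A u v :
  lip u (sinv A v) = lip u v - 2 * lip v A * lip u A / lip A A.
Proof. by rewrite lipC lip_sinvl lipC. Qed.

Lemma lip_sinvC A u v : lip (sinv A u) v = lip u (sinv A v).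
Proof. by rewrite lip_sinvl lip_sinvr (mulrAC 2 (lip v A)). Qed.

Lemma sinv_isometry A u v : lip A A != 0 -> lip (sinv A u) (sinv A v) = lip u v.
Proof. by move=> AA0; rewrite lip_sinvl lip_sinvr lip_sinvl; field. Qed.

Lemma sinvD A u v : sinv A (u + v) = sinv A u + sinv A v.
Proof. by rewrite /sinv lipDl !mulrDr !mulrDl scalerDl opprD addrACA. Qed.

Lemma sinv_id A u : lip u A = 0 -> sinv A u = u.
Proof. by move=> uA; rewrite /sinv uA mulr0 mul0r scale0r subr0. Qed.

Lemma sinv_fixed_orth A u : lip A A != 0 -> sinv A u = u -> lip u A = 0.
Proof.
move=> AA0 /(congr1 (fun v => lip v A)); rewrite lip_sinvl => /eqP.
rewrite -subr_eq0 addrAC subrr add0r oppr_eq0 mulfK // mulf_eq0 pnatr_eq0 /=.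
by move/eqP.
Qed.

Lemma sinvK A : lip A A != 0 -> involutive (sinv A).
Proof.
move=> AA0 u; rewrite {1}/sinv lip_sinvl /sinv.
by apply/rowP => k; rewrite !mxE; field.
Qed.

Lemma cr_isZ2 a b c d s lam : cr_is a b c d lam -> cr_is a (s *: b) c d lam.
Proof.
rewrite /cr_is /cr_D /cr_N1 /cr_N2 lipZl lipZr lipZl => e.
transitivity (s * (lip b c * lip d a + lip a b * lip c d - lip a c * lip b d)).
  by ring.
by rewrite e; ring.
Qed.

End InnerProduct.

Lemma int_ind_iff (P : int -> Prop) :
  P 0 -> (forall i, P i <-> P (i + 1)) -> forall i, P i.
Proof.
move=> P0 step; elim/int_ind => // n IH.
  by rewrite -addn1 PoszD; apply: (step n).1.
by apply: (step _).2; rewrite -addn1 PoszD opprD addrNK.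
Qed.

Lemma sinv_translate (R : rcfType) (A u w : 'rV[R]_5) :
  lip w A = 0 -> sinv A (u + w) = sinv A u + w.
Proof. by move=> wA; rewrite sinvD (sinv_id wA). Qed.

Section CandidatePoint.
Variables (R : rcfType) (C mb : 'rV[R]_5) (mu nu : R).
Hypotheses (C_null : lip C C = 0) (C_pt : lip C (pt R) = -1) (C_mb : lip C mb = 0).

Local Notation G := (C + mu *: mb + nu *: pt R).
Local Notation q := (lip mb (pt R)).
Local Notation M := (lip mb mb).

Lemma lip_candidate_pt : lip G (pt R) = mu * q - nu - 1.
Proof. by rewrite !lipDl !lipZl C_pt lip_pt_pt; ring. Qed.

Lemma lip_candidate_mb : lip G mb = mu * M + nu * q.
Proof. by rewrite !lipDl !lipZl C_mb (lipC (pt R)) add0r. Qed.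

Lemma lip_candidate_C : lip G C = - nu.
Proof. by rewrite !lipDl !lipZl C_null (lipC mb) C_mb (lipC (pt R)) C_pt; ring. Qed.

Lemma lip_candidate_self : lip G G = mu ^+ 2 * M - nu ^+ 2 - 2 * nu + 2 * mu * nu * q.
Proof.
rewrite [in LHS]lipDl [lip (_ + _) G]lipDl !lipZl (lipC C) (lipC mb) (lipC (pt R)).
by rewrite lip_candidate_C lip_candidate_mb lip_candidate_pt; ring.
Qed.

Lemma candidate_eq0_isotropic : G = 0 -> M = 0.
Proof.
move=> G0; have := lip_candidate_C; have := lip_candidate_pt; have := lip_candidate_mb.
rewrite G0 !lip0l => eM ep eC.
have nu0 : nu = 0 by lra.
move: eM ep; rewrite nu0 mul0r addr0 subr0 => muM /eqP; rewrite eq_sym subr_eq0 => /eqP muq.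
by rewrite -[M]mul1r -muq mulrAC -muM mul0r.
Qed.

Hypothesis nu_def : nu = mu * q - 1.

Lemma candidate_is_point :
  mu ^+ 2 * (M + q ^+ 2) - 2 * mu * q + 1 = 0 -> G != 0 -> is_point G.
Proof.
move=> mu_root G0; split=> //; split; last by rewrite lip_candidate_pt nu_def; ring.
by rewrite lip_candidate_self -mu_root nu_def; ring.
Qed.

End CandidatePoint.

Lemma face_cross_ratio (R : rcfType) (A F C mb : 'rV[R]_5) (mu nu lam : R) :
  lip A A != 0 -> lip mb A = 0 -> lip (pt R) A = 0 ->
  lip F F = 0 -> lip F (pt R) = 0 -> lip (sinv A C) F = 0 ->
  let G := C + mu *: mb + nu *: pt R in
  lip G G = 0 ->
  lip F C * (lip F C + mu * lip F mb) = lam * (lip F C + mu * lip F mb) ^+ 2 ->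
  cr_is F (sinv A F) (sinv A G) G lam.
Proof.
move=> AA0 mbA pA FF0 Fp CF G GG0 lamE.
have GA : lip G A = lip C A by rewrite !lipDl !lipZl mbA pA; ring.
have FG : lip F G = lip F C + mu * lip F mb by rewrite !lipDr !lipZr Fp; ring.
have sG : sinv A G = sinv A C + mu *: mb + nu *: pt R.
  by rewrite !sinv_translate // lipZl ?mbA ?pA mulr0.
have FsG : lip F (sinv A G) = mu * lip F mb.
  by rewrite sG 2!lipDr !lipZr (lipC F) CF Fp; ring.
have FC : lip F C = 2 * lip C A * lip F A / lip A A.
  by move: CF; rewrite lip_sinvl lipC => /eqP; rewrite subr_eq0 => /eqP.
have N1 : lip F (sinv A F) * lip (sinv A G) G = lip F C ^+ 2.
  by rewrite lip_sinvr lip_sinvl FF0 GG0 GA FC; field.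
(* with [x = <F,C>], [y = <F,mb>]: D = (x + mu y)^2, N1 = x^2, N2 = (mu y)^2 *)
rewrite /cr_is /cr_D /cr_N1 /cr_N2 sinv_isometry // (lipC G) FG N1 FsG.
rewrite lip_sinvC FsG.
transitivity (2 * (lip F C * (lip F C + mu * lip F mb))); first by ring.
by rewrite lamE; ring.
Qed.

Lemma sinv_fixed_dichotomy (R : rcfType) (A u : int -> 'rV[R]_5) (k : 'rV[R]_5) :
  (forall i, lip (A i) (A i) != 0) -> (forall i, lip k (A i) = 0) ->
  (forall i, sinv (A i) (u i) = u (i + 1)) ->
  (forall i, u i = k) \/ (forall i, u i != k).
Proof.
move=> AA0 kA uE.
have stepE i : u i = k <-> u (i + 1) = k.
  split=> [ui | ui1]; first by rewrite -uE ui sinv_id.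
  by rewrite -(sinvK (AA0 i) (u i)) uE ui1 sinv_id.
have [u0 | u0] := eqVneq (u 0) k; [left | right]; apply: int_ind_iff => // i.
by split; apply: contra_neq; [exact: (stepE i).2 | exact: (stepE i).1].
Qed.

Lemma quadratic_root_formula (R : fieldType) (q M s : R) :
  s ^+ 2 = - M -> q ^+ 2 + M != 0 ->
  ((q + s) / (q ^+ 2 + M)) ^+ 2 * (M + q ^+ 2) - 2 * ((q + s) / (q ^+ 2 + M)) * q + 1 = 0.
Proof. by move=> sE D0; rewrite -[M]opprK -sE in D0 *; field. Qed.

Section Evolution.
Variables (R : rcfType) (f a c : int -> 'rV[R]_5) (mb : 'rV[R]_5).
Hypotheses (f_curve : discrete_curve f) (a_evol : evolution_map f a).
Hypothesis mb_orth : forall i, lip mb (a i) = 0.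
Hypothesis c_pencil : forall i, in_pencil f i (c i).
Hypothesis c_pt : forall i, lip (c i) (pt R) = -1.
Hypothesis c_evol : forall i, sinv (a i) (c i) = c (i + 1).
Hypothesis c_mb : forall i, lip (c i) mb = 0.

Local Notation q := (lip mb (pt R)).
Local Notation M := (lip mb mb).

Let a_nondeg i : lip (a i) (a i) != 0. Proof. by have [[]] := a_evol i. Qed.
Let c_null i : lip (c i) (c i) = 0. Proof. by have [_ []] := c_pencil i. Qed.
Let pt_orth i : lip (pt R) (a i) = 0. Proof. by have [[_ ]] := a_evol i; rewrite lipC. Qed.

Lemma evolution_scale i : exists2 t : R, t != 0 & f (i + 1) = t *: sinv (a i) (f i).
Proof.
have [_ [t [t0 ->]]] := a_evol i.
by exists t^-1; rewrite ?invr_eq0 // scalerA mulVf ?scale1r.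
Qed.

Lemma lip_evolution_scale i : exists2 t : R, t != 0 &
  lip (f (i + 1)) (c (i + 1)) = t * lip (f i) (c i) /\
  lip (f (i + 1)) mb = t * lip (f i) mb.
Proof.
have [t t0 ->] := evolution_scale i; exists t => //.
have mb_fixed : sinv (a i) mb = mb by rewrite sinv_id.
by rewrite !lipZl -c_evol -[in lip _ mb]mb_fixed !sinv_isometry.
Qed.

Section CandidateCurve.
Variables (mu nu : R) (g : int -> 'rV[R]_5).
Hypothesis nu_def : nu = mu * q - 1.
Hypothesis mu_root : mu ^+ 2 * (M + q ^+ 2) - 2 * mu * q + 1 = 0.
Hypothesis g_def : forall i, g i = c i + mu *: mb + nu *: pt R.
Hypothesis g_neq0 : forall i, g i != 0.

Lemma candidate_ribaucour : ribaucour_via a g.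
Proof.
split=> i.
  rewrite g_def; apply: (candidate_is_point (c_null i) (c_pt i) (c_mb i) nu_def mu_root).
  by rewrite -g_def.
by rewrite !g_def !sinv_translate ?c_evol // lipZl ?mb_orth ?pt_orth mulr0.
Qed.

Lemma candidate_darboux_pair : darboux_pair f g.
Proof.
pose x i := lip (f i) (c i); pose y i := lip (f i) mb.
(* if [x 0 + mu * y 0 = 0] then [lam = 0], and [Q] holds with both sides 0 *)
pose lam := x 0 / (x 0 + mu * y 0).
pose Q i := x i * (x i + mu * y i) = lam * (x i + mu * y i) ^+ 2.
have Q0 : Q 0.
  rewrite /Q /lam; have [->|z0] := eqVneq (x 0 + mu * y 0) 0.
    by rewrite invr0 !mulr0 mul0r.
  by field.
have Qstep i : Q i <-> Q (i + 1).
  have [t t0 [xE yE]] := lip_evolution_scale i.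
  rewrite /Q /x /y xE yE; set x0 := lip (f i) (c i); set y0 := lip (f i) mb.
  split=> e.
    transitivity (t ^+ 2 * (x0 * (x0 + mu * y0))); first by ring.
    by rewrite e; ring.
  apply: (mulfI (expf_neq0 2 t0)).
  transitivity (t * x0 * (t * x0 + mu * (t * y0))); first by ring.
  by rewrite e; ring.
exists lam => i.
have [_ [ffi fpi]] := (f_curve.1 i).
have [t _ ->] := evolution_scale i.
apply: cr_isZ2; rewrite (candidate_ribaucour.2 i) g_def.
apply: face_cross_ratio => //; last exact: int_ind_iff Q0 Qstep i.
- by rewrite c_evol; have [_ [_ []]] := c_pencil (i + 1); rewrite addrK.
- by rewrite -g_def; have [_ []] := candidate_ribaucour.1 i.
Qed.

Lemma candidate_darboux : darboux_transform_via a f g.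
Proof. by split; [exact: candidate_ribaucour | exact: candidate_darboux_pair]. Qed.

End CandidateCurve.

Lemma candidate_neq0 mu nu i : M != 0 -> c i + mu *: mb + nu *: pt R != 0.
Proof. by move=> M0; apply: contra_neq M0; apply: candidate_eq0_isotropic. Qed.

Lemma darboux_timelike : M < 0 -> q ^+ 2 + M != 0 ->
  let mup := (q + Num.sqrt (- M)) / (q ^+ 2 + M) in
  let mum := (q - Num.sqrt (- M)) / (q ^+ 2 + M) in
  let gp := fun i => c i + mup *: mb + (mup * q - 1) *: pt R in
  let gm := fun i => c i + mum *: mb + (mum * q - 1) *: pt R in
  [/\ darboux_transform_via a f gp, darboux_transform_via a f gm
    & forall i, gp i != gm i].
Proof.
move=> M_lt0 D0 mup mum gp gm; have M0 : M != 0 by rewrite lt_eqF.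
have sqrtE : Num.sqrt (- M) ^+ 2 = - M by rewrite sqr_sqrtr // oppr_ge0 ltW.
split.
- apply: (candidate_darboux (nu := mup * q - 1)) => // [|i]; last exact: candidate_neq0.
  exact: quadratic_root_formula.
- apply: (candidate_darboux (nu := mum * q - 1)) => // [|i]; last exact: candidate_neq0.
  by apply: quadratic_root_formula; rewrite ?sqrrN.
- move=> i; apply/eqP => /(congr1 (fun v => lip v mb)).
  rewrite !lip_candidate_mb //; apply/eqP.
  have sqrt_gt0 : 0 < Num.sqrt (- M) by rewrite sqrtr_gt0 oppr_gt0.
  have -> : mup * M + (mup * q - 1) * q = Num.sqrt (- M) by rewrite /mup; field.
  have -> : mum * M + (mum * q - 1) * q = - Num.sqrt (- M) by rewrite /mum; field.
  by rewrite gt_eqF // -subr_gt0 opprK -mulr2n mulrn_wgt0.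
Qed.

Lemma darboux_double_root : q ^+ 2 + M = 0 -> q != 0 ->
  darboux_transform_via a f (fun i => c i + (2 * q)^-1 *: mb - 2^-1 *: pt R).
Proof.
move=> D0 q0; have M0 : M != 0 by rewrite -[M](addKr (q ^+ 2)) D0 addr0 oppr_eq0 sqrf_eq0.
apply: (candidate_darboux (mu := (2 * q)^-1) (nu := - 2^-1)) => [||i|i].
- by field.
- by rewrite (addrC M) D0; field.
- by rewrite scaleNr.
- by rewrite -scaleNr; apply: candidate_neq0.
Qed.

Lemma darboux_isotropic : M = 0 -> q != 0 ->
  let g := fun i => c i + q^-1 *: mb in
  (forall i, c i = - (q^-1 *: mb)) \/
  (darboux_transform_via a f g /\ forall i, lip (g i) mb = 0).
Proof.
move=> M0 q0 g.
have k_orth i : lip (- (q^-1 *: mb)) (a i) = 0.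
  by rewrite lipNl lipZl mb_orth mulr0 oppr0.
have [c_const|c_nconst] := sinv_fixed_dichotomy a_nondeg k_orth c_evol; [by left|right].
split=> [|i]; last by rewrite lipDl lipZl c_mb M0 mulr0 addr0.
apply: (candidate_darboux (mu := q^-1) (nu := 0)) => [||i|i].
- by rewrite mulVf ?subrr.
- by rewrite M0 add0r; field.
- by rewrite scale0r addr0.
- by rewrite /g addr_eq0.
Qed.

End Evolution.

Theorem theorem3p9 (R : rcfType) (f a c : int -> 'rV[R]_5) (m : 'rV[R]_5) (xi : R) :
  discrete_curve f ->
  evolution_map f a ->
  m_type m a ->
  (forall i, in_pencil f i (c i)) ->
  (forall i, lip (c i) (pt R) = -1) ->
  (forall i, sinv (a i) (c i) = c (i + 1)) ->
  (forall i, lip (c i) (m - xi *: pt R) = 0) ->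
  let mb := m - xi *: pt R in
  let q := lip mb (pt R) in
  let M := lip mb mb in
  [/\ (* (i) *)
      (M < 0 -> q ^+ 2 + M != 0 ->
       let mup := (q + Num.sqrt (- M)) / (q ^+ 2 + M) in
       let mum := (q - Num.sqrt (- M)) / (q ^+ 2 + M) in
       let gp := fun i => c i + mup *: mb + (mup * q - 1) *: pt R in
       let gm := fun i => c i + mum *: mb + (mum * q - 1) *: pt R in
       [/\ darboux_transform_via a f gp, darboux_transform_via a f gm
         & forall i, gp i != gm i]),
      (* (ii) *)
      (q ^+ 2 + M = 0 -> q != 0 ->
       darboux_transform_via a f
         (fun i => c i + (2 * q)^-1 *: mb - 2^-1 *: pt R))
    & (* (iii) *)
      (M = 0 -> q != 0 ->
       let g := fun i => c i + q^-1 *: mb in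
       (forall i, c i = - (q^-1 *: mb)) \/
       (darboux_transform_via a f g /\ forall i, lip (g i) mb = 0))].
Proof.
move=> f_curve a_evol m_typ c_pencil c_pt c_evol c_mb mb q M.
have mb_orth i : lip mb (a i) = 0.
  have [[a_nondeg _] _] := a_evol i.
  by apply: sinv_fixed_orth a_nondeg _; rewrite /mb -scaleNr -[m]scale1r m_typ.
split.
- exact: darboux_timelike.
- exact: darboux_double_root.
- exact: darboux_isotropic.
Qed.
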